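(* Let $k\ge 2$ be an integer. The number $b_0(\mathcal F_k)$ of connected components of the $k$-Farey graph $\mathcal F_k$ is \[ b_0(\mathcal F_k)=\begin{cases} p^{\ell-1}(p+1) & \text{if } k=p^\ell \text{ for a prime } p \text{ and an integer } \ell>0,\\ \infty & \text{otherwise.}\end{cases} \]
   Context: The vertex set $V$ consists of all reduced fractions $p/q$ with $p,q\in\mathbb Z$, $\gcd(p,q)=1$, together with $1/0$; here $p/q$ and $(-p)/(-q)$ denote the same vertex. For vertices define $d(p/q,a/b)=|pb-qa|$ (well defined). The $k$-Farey graph $\mathcal F_k$ has vertex set $V$, with an edge between $p/q$ and $a/b$ exactly when $d(p/q,a/b)=k$. *)

From HB Require Import structures.
From mathcomp Require Import all_boot all_order all_algebra.
From mathcomp Require Import boolp classical_sets cardinality.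
From Stdlib Require Import Relation_Operators.
Set Implicit Arguments. Unset Strict Implicit. Unset Printing Implicit Defensive.
Import Order.TTheory GRing.Theory Num.Theory.
Local Open Scope ring_scope.
Local Open Scope classical_set_scope.

(* A vertex p/q of the Farey graph is represented by its canonical
   representative (p, q): gcd(p,q) = 1 and either q > 0, or (p,q) = (1,0)
   (the vertex 1/0).  This identifies p/q with (-p)/(-q). *)
Definition canon (x : int * int) : bool :=
  (gcdz x.1 x.2 == 1) && ((0 < x.2) || (x == (1, 0))).

Definition vertex := {x : int * int | canon x}.

Definition fdist (v w : vertex) : int :=
  `| (sval v).1 * (sval w).2 - (sval v).2 * (sval w).1 |.

Definition farey_edge (k : nat) (v w : vertex) : Prop := fdist v w = k%:Z.

Definition farey_conn (k : nat) : vertex -> vertex -> Prop :=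
  clos_refl_trans vertex (farey_edge k).

Definition farey_components (k : nat) : set (set vertex) :=
  [set C | exists v : vertex, C = [set w : vertex | farey_conn k v w]].

(* Along a path in F_k consecutive vertices x, y satisfy k | det x y, where
   det x y = x.1 y.2 - x.2 y.1; on primitive vectors this relation is transitive and its classes
   are the points of the projective line over Z/k.  For k = p^l the converse holds: if
   k | det v w and |det v w| > k, then w has a neighbour u = t w + k r (det w r = 1, t prime to p)
   with k | det v u and |det v u| < |det v w|.  So the components of F_(p^l) are the
   p^(l-1) (p + 1) points of P^1(Z/p^l).
   If k has two prime factors p <> q, consider the denominator (height) on the vertices whose
   denominator is divisible by k, a set closed under edges.  Two lower neighbours of a vertex are equal
   or adjacent, and adjacent vertices of equal height have height k and are both adjacent to
   1/0; by a Newman-type argument each component then has at most one local minimum of the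
   height.  The vertices -(1 + (c + 1) k J) / (k^2 J) with p | c + 1 and q | c are local minima
   for every J >= 1, hence lie in distinct components. *)

From Pilot Require Import Defs.
From mathcomp Require Import all_boot all_order all_algebra.
From mathcomp Require Import boolp classical_sets cardinality.
From mathcomp Require Import zify ring.
From Stdlib Require Import Relation_Operators Operators_Properties.
Set Implicit Arguments. Unset Strict Implicit. Unset Printing Implicit Defensive.
Import Order.TTheory GRing.Theory Num.Theory.
Local Open Scope ring_scope.
Local Open Scope classical_set_scope.

Definition det (x y : int * int) : int := x.1 * y.2 - x.2 * y.1.

Definition primitive (x : int * int) : bool := coprimez x.1 x.2.

Lemma detC x y : det x y = - det y x.
Proof. by rewrite /det; ring. Qed.

Lemma normr_detC x y : `|det x y| = `|det y x|.
Proof. by rewrite detC normrN. Qed.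

Lemma det_expand x r u :
  det x r * u.1 = det u r * x.1 + det x u * r.1 /\
  det x r * u.2 = det u r * x.2 + det x u * r.2.
Proof. by split; rewrite /det; ring. Qed.

Lemma primitiveP x : reflect (exists r, det x r = 1) (primitive x).
Proof.
apply: (iffP (coprimezP _ _)) => [[[a b] /= abE] | [r xr1]].
  by exists (- b, a); rewrite /det /= -abE; ring.
by exists (r.2, - r.1); rewrite /= -xr1 /det; ring.
Qed.

Lemma primitive_dvd x d :
  primitive x -> (d %| x.1)%Z -> (d %| x.2)%Z -> `|d| = 1.
Proof.
move=> /eqP x_prim d1 d2.
have : (d %| gcdz x.1 x.2)%Z by rewrite dvdz_gcd d1 d2.
by rewrite x_prim dvdz1 => /eqP d_1; rewrite -abszE d_1.
Qed.

Lemma primitive_basis_dvd x r u d : det x r = 1 -> primitive u ->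
  (d %| det u r)%Z -> (d %| det x u)%Z -> `|d| = 1.
Proof.
move=> xr1 u_prim d_ur d_xu; have [u1E u2E] := det_expand x r u.
rewrite xr1 !mul1r in u1E u2E.
by apply: primitive_dvd u_prim _ _; rewrite ?u1E ?u2E rpredD ?dvdz_mulr.
Qed.

Lemma dvdz_det k x y z :
  primitive y -> (k %| det x y)%Z -> (k %| det y z)%Z -> (k %| det x z)%Z.
Proof.
move=> /primitiveP[r yr1] kxy kyz.
have -> : det x z = det x y * det z r + det x r * det y z.
  by rewrite -[LHS]mulr1 -yr1 /det; ring.
by apply: rpredD; [exact: dvdz_mulr | exact: dvdz_mull].
Qed.

Lemma dvdz_lt_eq0 (d m : int) : (d %| m)%Z -> `|m| < `|d| -> m = 0.
Proof.
move=> /dvdzP[c m_cd] lt_cd; rewrite m_cd normrM in lt_cd *.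
have -> : c = 0 by apply/eqP; apply: contraTT lt_cd => c0; rewrite -leNgt ler_peMl // norm_intr_ge1.
by rewrite mul0r.
Qed.

Lemma eq_dvdz_norm d x y : `|x| = `|y| -> (d %| x)%Z = (d %| y)%Z.
Proof. by move=> xy; rewrite !dvdzE; congr (_ %| _)%N; lia. Qed.

Lemma vertex_primitive (v : vertex) : primitive (sval v).
Proof. by case: v => x /= /andP[]. Qed.

Lemma vertex_height_ge0 (v : vertex) : 0 <= (sval v).2.
Proof. by case: v => -[a b] /= /andP[_ /orP[/ltW | /eqP[_ ->]]]. Qed.

Lemma vertex_height0 (v : vertex) : (sval v).2 = 0 -> sval v = (1, 0).
Proof. by case: v => -[a b] /= /andP[_ /orP[/[swap] -> | /eqP]]. Qed.

Definition infty : vertex := Sub (1, 0) isT.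

Lemma det_inftyl y : det (sval infty) y = y.2.
Proof. by rewrite /det /= mul1r mul0r subr0. Qed.

Lemma vertex_of_primitive x :
  primitive x -> exists v : vertex, forall y, `|det (sval v) y| = `|det x y|.
Proof.
move=> x_prim; case: (ltrgtP 0 x.2) => [x2_gt0 | x2_lt0 | x2_0].
- have x_canon : Defs.canon x by rewrite /Defs.canon x2_gt0 andbT.
  by exists (Sub x x_canon).
- have nx_canon : Defs.canon (- x.1, - x.2).
    by rewrite /Defs.canon /= gcdNz gcdzN oppr_gt0 x2_lt0 andbT.
  by exists (Sub _ nx_canon) => y; rewrite /det /= -normrN; congr `|_|; ring.
- have x1_unit : `|x.1| = 1 by apply: (primitive_dvd x_prim); rewrite ?dvdzz // -x2_0 dvdz0.
  by exists infty => y; rewrite det_inftyl /det -x2_0 mul0r subr0 normrM x1_unit mul1r.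
Qed.

Lemma vertex_det0 (v w : vertex) : det (sval v) (sval w) = 0 -> v = w.
Proof.
move=> vw0; have [r vr1] := primitiveP _ (vertex_primitive v).
have [w1E w2E] := det_expand (sval v) r (sval w).
rewrite vr1 vw0 !mul1r !mul0r !addr0 in w1E w2E.
set c := det (sval w) r in w1E w2E.
have c_unit : `|c| = 1.
  by apply: primitive_dvd (vertex_primitive w) _ _; rewrite ?w1E ?w2E dvdz_mulr.
have [c1 | cN1] : c = 1 \/ c = -1 by lia.
  by apply: val_inj => /=; rewrite [RHS]surjective_pairing w1E w2E c1 !mul1r -surjective_pairing.
have := vertex_height_ge0 v; have := vertex_height_ge0 w; rewrite w2E cN1 => w2_ge0 v2_ge0.
have v2_0 : (sval v).2 = 0 by lia.
have w10 : sval w = (1, 0) by apply: vertex_height0; rewrite w2E v2_0 mulr0.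
by move: w1E; rewrite (vertex_height0 v2_0) w10 cN1 /=; lia.
Qed.

Lemma fdistE v w : fdist v w = `|det (sval v) (sval w)|.
Proof. by []. Qed.

Lemma farey_edge_sym k v w : farey_edge k v w -> farey_edge k w v.
Proof. by rewrite /farey_edge !fdistE normr_detC. Qed.

Lemma farey_conn_sym k v w : farey_conn k v w -> farey_conn k w v.
Proof.
elim=> [x y /farey_edge_sym yx | x | x y z _ xy _ yz].
- exact: rt_step.
- exact: rt_refl.
- exact: rt_trans yz xy.
Qed.

Lemma farey_edge_dvd k v w : farey_edge k v w -> (k%:Z %| det (sval v) (sval w))%Z.
Proof.
rewrite /farey_edge fdistE dvdzE => vw_k.
by have -> : `|det (sval v) (sval w)|%N = k by lia.
Qed.

Lemma farey_conn_dvd k v w : farey_conn k v w -> (k%:Z %| det (sval v) (sval w))%Z.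
Proof.
elim=> [x y /farey_edge_dvd kxy | x | x y z _ kxy _ kyz].
- exact: kxy.
- by rewrite /det mulrC subrr dvdz0.
- exact: dvdz_det (vertex_primitive y) kxy kyz.
Qed.

Lemma farey_components_card k N (g : nat -> vertex) :
  (forall v, exists2 i, (i < N)%N & farey_conn k v (g i)) ->
  (forall i j, (i < N)%N -> (j < N)%N -> farey_conn k (g i) (g j) -> i = j) ->
  (farey_components k #= `I_N)%card.
Proof.
move=> g_onto g_inj; pose comp i := [set w | farey_conn k (g i) w].
have -> : farey_components k = comp @` `I_N.
  apply/seteqP; split => [C [v ->] | C [i _ <-]]; last by exists (g i).
  have [i iN vgi] := g_onto v; exists i => //; apply/seteqP; split => w /=.
    exact: rt_trans vgi.
  exact: rt_trans (farey_conn_sym vgi).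
apply: inj_card_eq => i j /set_mem iN /set_mem jN comp_ij.
have : comp j (g j) by apply: rt_refl.
by rewrite -comp_ij; apply: g_inj.
Qed.

Lemma farey_components_infinite k (g : nat -> vertex) :
  (forall i j, farey_conn k (g i) (g j) -> i = j) -> infinite_set (farey_components k).
Proof.
move=> g_inj; apply/infiniteP; pose comp i := [set w | farey_conn k (g i) w].
have comp_inj : {in [set: nat] &, injective comp}.
  move=> i j _ _ comp_ij; have : comp j (g j) by apply: rt_refl.
  by rewrite -comp_ij; apply: g_inj.
have /card_eqPle[_ le_comp] := inj_card_eq comp_inj.
apply: card_le_trans le_comp _; apply: subset_card_le => _ [i _ <-].
by exists (g i).
Qed.

Lemma exists_neighbour (k : nat) (w : vertex) r t :
  det (sval w) r = 1 -> coprimez t k%:Z ->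
  exists2 u : vertex, farey_edge k u w &
    forall y, `|det y (sval u)| = `|t * det y (sval w) + k%:Z * det y r|.
Proof.
move=> wr1 /coprimezP[[a b] /= abE].
set x := (t * (sval w).1 + k%:Z * r.1, t * (sval w).2 + k%:Z * r.2).
have x_prim : primitive x.
  apply/primitiveP; exists (a * r.1 - b * (sval w).1, a * r.2 - b * (sval w).2).
  by rewrite -abE -[RHS]mulr1 -wr1 /det /=; ring.
have [u uE] := vertex_of_primitive x_prim; exists u.
  rewrite /farey_edge fdistE uE.
  have -> : det x (sval w) = - (k%:Z * det (sval w) r) by rewrite /det /=; ring.
  by rewrite wr1 mulr1 normrN.
by move=> y; rewrite normr_detC uE normr_detC /det /=; congr `|_|; ring.
Qed.

Lemma affine_chart_rep (d : nat) x : (0 < d)%N -> coprimez x.2 d%:Z ->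
  exists2 y : nat, (y < d)%N & (d%:Z %| det x (y%:Z, 1))%Z.
Proof.
move=> d_gt0 /coprimezP[[a b] /= abE].
have d_neq0 : d%:Z != 0 by rewrite lt0r_neq0 ?ltz_nat.
move: (divz_eq (x.1 * a) d%:Z) (modz_ge0 (x.1 * a) d_neq0) (ltz_mod (x.1 * a) d_neq0).
move: (_ %/ _)%Z (_ %% _)%Z => q e x1aE e_ge0 e_lt.
exists `|e|%N; first lia.
apply/dvdzP; exists (x.1 * b + x.2 * q); rewrite gez0_abs // /det /=.
have -> : e = x.1 * a - q * d%:Z by rewrite x1aE; ring.
apply/eqP; rewrite -subr_eq0; apply/eqP.
by transitivity (x.1 * (1 - (a * x.2 + b * d%:Z))); [ring | rewrite abE subrr mulr0].
Qed.

Section PrimePower.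

Variables (p n : nat).
Hypothesis p_prime : prime p.

Local Notation k := (p ^ n.+1)%N.
Local Notation N := (p ^ n * p.+1)%N.

Lemma ppow_indexE : N = (k + p ^ n)%N.
Proof. by rewrite mulnS expnSr addnC. Qed.

Lemma ppow_gt0 : 0 < k%:Z.
Proof. by rewrite ltz_nat expn_gt0 prime_gt0. Qed.

Lemma p_ndvd1 : ~~ (p%:Z %| 1)%Z.
Proof. by rewrite dvdz1 gtn_eqF ?prime_gt1. Qed.

Lemma coprimez_ppow t : coprimez t k%:Z = ~~ (p%:Z %| t)%Z.
Proof. by rewrite coprimez_sym coprimezE /= coprime_pexpl // prime_coprime. Qed.

Lemma exists_coprime_shift (m a : int) : m != 0 -> ~~ (m %| a)%Z ->
  exists2 t, ~~ (p%:Z %| t)%Z & `|t * m + a| < `|m|.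
Proof.
wlog m_gt0 : m a / 0 < m => [hwlog m_neq0 m_ndvd_a | _ m_ndvd_a].
  have [m_lt0 | m_gt0] : m < 0 \/ 0 < m by lia.
    have [|||t p_t small] := hwlog (- m) (- a); rewrite ?oppr_gt0 ?oppr_eq0 //.
      by rewrite dvdzE !abszN.
    by exists t; rewrite // -normrN -[X in _ < X]normrN opprD -mulrN.
  exact: hwlog.
have m_neq0 : m != 0 by rewrite gt_eqF.
have e_neq0 : (a %% m)%Z != 0 by apply: contra m_ndvd_a => /eqP/dvdz_mod0P.
have e_ge0 := modz_ge0 a m_neq0; have e_lt := ltz_mod a m_neq0.
move: (a %/ m)%Z (a %% m)%Z (divz_eq a m) e_neq0 e_ge0 e_lt => q e aE e_neq0 e_ge0 e_lt.
have [p_q | p_nq] := boolP (p%:Z %| - q)%Z; last first.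
  exists (- q) => //; have -> : - q * m + a = e by rewrite aE; ring.
  lia.
exists (- q - 1).
  apply: contra p_ndvd1 => p_q1; have -> : 1 = - q - (- q - 1) :> int by ring.
  exact: rpredB.
have -> : (- q - 1) * m + a = e - m by rewrite aE; ring.
lia.
Qed.

Lemma ppow_descent_step (v w : vertex) :
  (k%:Z %| det (sval v) (sval w))%Z -> k%:Z < `|det (sval v) (sval w)| ->
  exists2 u : vertex, farey_edge k u w &
    (k%:Z %| det (sval v) (sval u))%Z /\ `|det (sval v) (sval u)| < `|det (sval v) (sval w)|.
Proof.
move=> /dvdzP[m vwE]; rewrite vwE normrM (gtr0_norm ppow_gt0) => k_lt.
have m_gt1 : 1 < `|m| by rewrite -(ltr_pMl _ ppow_gt0).
have [r wr1] := primitiveP _ (vertex_primitive w).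
set a := det (sval v) r.
have m_ndvd_a : ~~ (m %| a)%Z.
  apply: contraTN m_gt1 => m_a; rewrite -leNgt.
  have m_wv : (m %| det (sval w) (sval v))%Z by rewrite detC vwE rpredN dvdz_mulr.
  by rewrite (primitive_basis_dvd wr1 (vertex_primitive v) m_a m_wv).
have [|t p_nt small] := exists_coprime_shift _ m_ndvd_a; first by rewrite -normr_gt0; lia.
have t_coprime : coprimez t k%:Z by rewrite coprimez_ppow.
have [u uw uE] := exists_neighbour wr1 t_coprime.
have vuE : `|det (sval v) (sval u)| = `|(t * m + a) * k%:Z| by rewrite uE vwE; congr `|_|; ring.
exists u => //; split; first by rewrite (eq_dvdz_norm _ vuE) dvdz_mull.
by rewrite vuE !normrM (gtr0_norm ppow_gt0) ltr_pM2r ?ppow_gt0.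
Qed.

Lemma ppow_conn_of_dvd (v w : vertex) :
  (k%:Z %| det (sval v) (sval w))%Z -> farey_conn k v w.
Proof.
have [d] := ubnP `|det (sval v) (sval w)|%N; elim: d w => // d IHd w lt_d k_vw.
have [lt_k | gt_k | eq_k] := ltrgtP `|det (sval v) (sval w)| k%:Z.
- have -> : w = v.
    by symmetry; apply/vertex_det0/(dvdz_lt_eq0 k_vw); rewrite (gtr0_norm ppow_gt0).
  exact: rt_refl.
- have [u uw [k_vu lt_vu]] := ppow_descent_step k_vw gt_k.
  by apply: rt_trans (rt_step _ _ _ _ uw); apply: IHd => //; lia.
- exact: rt_step.
Qed.

Lemma p_dvd_ppow : (p%:Z %| k%:Z)%Z.
Proof. by rewrite dvdzE /= expnS dvdn_mulr. Qed.

Definition proj_line_rep (i : nat) : int * int :=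
  if (i < k)%N then (i%:Z, 1) else (1, p%:Z * (i - k)%N%:Z).

Lemma proj_line_rep_canon i : Defs.canon (proj_line_rep i).
Proof.
rewrite /Defs.canon /proj_line_rep; case: ifP => _ /=; first by rewrite gcdz1 eqxx.
rewrite gcd1z eqxx /=; case: (i - k)%N => [|j]; first by rewrite mulr0 eqxx orbT.
by rewrite -PoszM ltz_nat muln_gt0 prime_gt0.
Qed.

Definition proj_line_vertex i : vertex := Sub (proj_line_rep i) (proj_line_rep_canon i).

Lemma proj_line_rep_mixed i j : (i < k)%N -> (k <= j)%N ->
  ~~ (k%:Z %| det (proj_line_rep i) (proj_line_rep j))%Z.
Proof.
rewrite /proj_line_rep /det => -> /= /leq_gtF -> /=.
apply: contra p_ndvd1 => /(dvdz_trans p_dvd_ppow) p_det.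
have p_ipj : (p%:Z %| i%:Z * (p%:Z * (j - k)%N%:Z))%Z by rewrite dvdz_mull // dvdz_mulr.
by move: (rpredB p_ipj p_det); rewrite mulr1 subKr.
Qed.

Lemma proj_line_rep_inj i j : (i < N)%N -> (j < N)%N ->
  (k%:Z %| det (proj_line_rep i) (proj_line_rep j))%Z -> i = j.
Proof.
move=> iN jN; have [ik | ki] := ltnP i k; have [jk | kj] := ltnP j k.
- rewrite /proj_line_rep ik jk /det /= !mulr1 => /dvdz_lt_eq0.
  by rewrite (gtr0_norm ppow_gt0); lia.
- by rewrite (negbTE (proj_line_rep_mixed ik kj)).
- by rewrite detC rpredN (negbTE (proj_line_rep_mixed jk ki)).
- rewrite /proj_line_rep ltnNge ki ltnNge kj /det /= !mul1r !mulr1 -mulrBr.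
  have -> : k%:Z = p%:Z * (p ^ n)%:Z by rewrite expnS PoszM.
  rewrite dvdz_mul2l ?lt0r_neq0 ?ltz_nat ?prime_gt0 // => /dvdz_lt_eq0.
  have := ppow_indexE; have : (0 < p ^ n)%N by rewrite expn_gt0 prime_gt0.
  lia.
Qed.

Lemma proj_line_rep_onto x : primitive x ->
  exists2 i, (i < N)%N & (k%:Z %| det x (proj_line_rep i))%Z.
Proof.
have k_gt0 : (0 < k)%N by rewrite expn_gt0 prime_gt0.
move=> x_prim; have [p_x2 | p_nx2] := boolP (p%:Z %| x.2)%Z; last first.
  have x2_cop : coprimez x.2 k%:Z by rewrite coprimez_ppow.
  have [y yk k_xy] := affine_chart_rep k_gt0 x2_cop.
  by exists y; rewrite ?ppow_indexE ?ltn_addr // /proj_line_rep yk.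
have p_nx1 : ~~ (p%:Z %| x.1)%Z.
  by apply/negP => p_x1; have := primitive_dvd x_prim p_x1 p_x2; have := prime_gt1 p_prime; lia.
have x1_cop : coprimez x.1 k%:Z by rewrite coprimez_ppow.
have [y yk k_xy] := affine_chart_rep (x := (x.2, x.1)) k_gt0 x1_cop.
have /dvdnP[j yE] : (p %| y)%N.
  have p_x1y : (p%:Z %| x.1 * y%:Z)%Z.
    have p_det := dvdz_trans p_dvd_ppow k_xy; rewrite /det /= mulr1 in p_det.
    by move: (rpredB p_x2 p_det); rewrite subKr.
  by rewrite Gauss_dvdzr ?coprimezE ?prime_coprime in p_x1y.
have jpn : (j < p ^ n)%N by rewrite -(ltn_pmul2r (prime_gt0 p_prime)) -yE -expnSr.
exists (k + j)%N; first by rewrite ppow_indexE ltn_add2l.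
rewrite /proj_line_rep ltnNge leq_addr addKn /=.
have -> : det x (1, p%:Z * j%:Z) = - det (x.2, x.1) (y%:Z, 1) by rewrite yE /det /= PoszM; ring.
by rewrite rpredN.
Qed.

Lemma ppow_components : (farey_components k #= `I_N)%card.
Proof.
apply: (@farey_components_card _ _ proj_line_vertex).
- move=> v; have [i iN k_vi] := proj_line_rep_onto (vertex_primitive v).
  by exists i => //; apply: ppow_conn_of_dvd.
- by move=> i j iN jN /farey_conn_dvd; apply: proj_line_rep_inj.
Qed.

End PrimePower.

Section LocalMinima.

Variables (T : Type) (h : T -> nat) (edge : T -> T -> Prop) (P : T -> Prop).

Definition descent x y := edge x y /\ (h y < h x)%N.

Definition local_min x := forall y, edge x y -> (h x <= h y)%N.

Local Notation reach := (clos_refl_trans T descent).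

Hypothesis edge_sym : forall x y, edge x y -> edge y x.
Hypothesis P_edge : forall x y, P x -> edge x y -> P y.
Hypothesis descent_fork :
  forall w u1 u2, P w -> descent w u1 -> descent w u2 -> u1 = u2 \/ edge u1 u2.
Hypothesis level_edge :
  forall x y, P x -> edge x y -> h x = h y -> exists z, descent x z /\ descent y z.

Lemma reachP x z : reach x z -> z = x \/ exists2 y, descent x y & reach y z.
Proof.
case/(clos_rt_rt1n T descent) => [|y z' xy yz]; first by left.
by right; exists y => //; apply: clos_rt1n_rt.
Qed.

Lemma reach_local_min x z : local_min x -> reach x z -> z = x.
Proof.
move=> x_min /reachP[// | [y [xy lt_yx] _]].
by have := x_min y xy; rewrite leqNgt lt_yx.
Qed.

Lemma exists_local_min x : exists2 z, reach x z & local_min z.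
Proof.
have [m] := ubnP (h x); elim: m x => // m IHm x lt_xm.
have [x_min | x_nmin] := pselect (local_min x); first by exists x => //; apply: rt_refl.
have /existsNP[y /not_implyP[xy /negP]] := x_nmin; rewrite -ltnNge => lt_yx.
have [|z yz z_min] := IHm y; first exact: leq_trans lt_yx _.
by exists z => //; apply: rt_trans yz; apply: rt_step.
Qed.

Lemma edge_joinable x y : P x -> edge x y -> exists2 z, reach x z & reach y z.
Proof.
move=> Px xy; case: (ltngtP (h x) (h y)) => [lt_xy | lt_yx | eq_xy].
- by exists x; [apply: rt_refl | apply: rt_step; split => //; apply: edge_sym].
- by exists y; [apply: rt_step | apply: rt_refl].
- have [z [xz yz]] := level_edge Px xy eq_xy.
  by exists z; apply: rt_step.
Qed.

Lemma local_min_unique x z1 z2 : P x ->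
  reach x z1 -> local_min z1 -> reach x z2 -> local_min z2 -> z1 = z2.
Proof.
have [m] := ubnP (h x); elim: m x z1 z2 => // m IHm x z1 z2 lt_xm Px.
move=> /reachP[-> x_min xz2 _ | [u1 xu1 u1z1] z1_min].
  exact/esym/(reach_local_min x_min).
move=> /reachP[-> x_min | [u2 xu2 u2z2] z2_min].
  by have := x_min _ xu1.1; rewrite leqNgt xu1.2.
have IHu u z z' : descent x u -> reach u z -> local_min z -> reach u z' -> local_min z' -> z = z'.
  move=> [xu lt_ux]; apply: IHm (leq_trans lt_ux _) (P_edge Px xu) => //.
have [u1E | u1u2] := descent_fork Px xu1 xu2.
  by rewrite u1E in u1z1; apply: IHu xu2 u1z1 z1_min u2z2 z2_min.
have [z u1z u2z] := edge_joinable (P_edge Px xu1.1) u1u2.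
have [z' zz' z'_min] := exists_local_min z.
have u1z' : reach u1 z' by apply: rt_trans u1z zz'.
have u2z' : reach u2 z' by apply: rt_trans u2z zz'.
by rewrite (IHu _ _ _ xu1 u1z1 z1_min u1z' z'_min) (IHu _ _ _ xu2 u2z' z'_min u2z2 z2_min).
Qed.

Lemma connected_reach x y z : clos_refl_trans T edge x y ->
  P x -> reach x z -> local_min z -> P y /\ reach y z.
Proof.
elim=> {x y} [x y xy | x | x y y' _ IHxy _ IHyy'] Px xz z_min; last 2 first.
- by [].
- by have [Py yz] := IHxy Px xz z_min; apply: IHyy'.
split; first exact: P_edge Px xy.
have [z0 xz0 yz0] := edge_joinable Px xy.
have [z' z0z' z'_min] := exists_local_min z0.
have xz' : reach x z' by apply: rt_trans xz0 z0z'.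
by rewrite (local_min_unique Px xz z_min xz' z'_min); apply: rt_trans z0z'.
Qed.

Lemma connected_local_min_eq z1 z2 : P z1 -> local_min z1 -> local_min z2 ->
  clos_refl_trans T edge z1 z2 -> z1 = z2.
Proof.
move=> Pz1 z1_min z2_min /connected_reach/(_ Pz1 (rt_refl _ _ _) z1_min)[_].
exact: reach_local_min.
Qed.

End LocalMinima.

Definition height (v : vertex) : nat := `|(sval v).2|%N.

Lemma heightE v : (height v)%:Z = (sval v).2.
Proof. exact: gez0_abs (vertex_height_ge0 v). Qed.

Section FareyLocalMinima.

Variable k : nat.
Hypothesis k_gt0 : (0 < k)%N.

Local Notation edge := (farey_edge k).

Let kz_gt0 : 0 < k%:Z. Proof. by rewrite ltz_nat. Qed.

Lemma dvd_height_edge v w : (k%:Z %| (sval v).2)%Z -> edge v w -> (k%:Z %| (sval w).2)%Z.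
Proof.
rewrite -[(sval v).2]det_inftyl -[(sval w).2]det_inftyl => k_v /farey_edge_dvd.
exact: dvdz_det (vertex_primitive v) k_v.
Qed.

Lemma farey_descent_fork w u1 u2 :
  descent height edge w u1 -> descent height edge w u2 -> u1 = u2 \/ edge u1 u2.
Proof.
move=> [wu1 lt1] [wu2 lt2]; move: lt1 lt2; rewrite -!ltz_nat !heightE => lt1 lt2.
have k_u1u2 : (k%:Z %| det (sval u1) (sval u2))%Z.
  apply: dvdz_det (vertex_primitive w) _ (farey_edge_dvd wu2).
  exact/farey_edge_dvd/farey_edge_sym.
have lt_2k : `|det (sval u1) (sval u2)| < 2 * k%:Z.
  have := vertex_height_ge0 u1; have := vertex_height_ge0 u2.
  have W_gt0 : 0 < (sval w).2 by apply: le_lt_trans lt1; apply: vertex_height_ge0.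
  move=> y2_ge0 y1_ge0; rewrite -(ltr_pM2r W_gt0) -{1}(gtr0_norm W_gt0) -normrM.
  have -> : det (sval u1) (sval u2) * (sval w).2 =
      det (sval w) (sval u2) * (sval u1).2 - det (sval w) (sval u1) * (sval u2).2.
    by rewrite /det; ring.
  apply: le_lt_trans (ler_normB _ _) _.
  rewrite !normrM -!fdistE wu1 wu2 (ger0_norm y1_ge0) (ger0_norm y2_ge0) -mulrDr -mulrA.
  by rewrite mulrCA ltr_pM2l //; lia.
move/dvdzP: k_u1u2 lt_2k => [c u1u2E].
rewrite u1u2E normrM (gtr0_norm kz_gt0) ltr_pM2r // => c_lt2.
have [c0 | c1] : c = 0 \/ `|c| = 1 by lia.
  by left; apply: vertex_det0; rewrite u1u2E c0 mul0r.
by right; rewrite /farey_edge fdistE u1u2E normrM c1 mul1r gtr0_norm.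
Qed.

Lemma farey_edge_infty v : (sval v).2 = k%:Z -> descent height edge v infty.
Proof.
move=> v2k; split; last by rewrite /height v2k.
by rewrite /farey_edge fdistE /det v2k /= mulr0 mulr1 sub0r normrN.
Qed.

Lemma farey_level_edge x y : (k%:Z %| (sval x).2)%Z -> edge x y ->
  height x = height y -> exists z, descent height edge x z /\ descent height edge y z.
Proof.
move=> /dvdzP[c x2E] xy /(congr1 Posz); rewrite !heightE => eq_h.
have x2k : (sval x).2 = k%:Z.
  have c_ge0 : 0 <= c by rewrite -(pmulr_lge0 _ kz_gt0) -x2E vertex_height_ge0.
  have xyE : det (sval x) (sval y) = c * ((sval x).1 - (sval y).1) * k%:Z.
    by rewrite /det -eq_h x2E; ring.
  have cd1 : `|c * ((sval x).1 - (sval y).1)| = `|1|.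
    apply: (mulIf (lt0r_neq0 kz_gt0)).
    by rewrite normr1 mul1r -{1}(gtr0_norm kz_gt0) -normrM -xyE.
  have : (c %| 1)%Z by rewrite -(eq_dvdz_norm _ cd1) dvdz_mulr.
  rewrite dvdz1 => /eqP c1.
  by rewrite x2E (_ : c = 1) ?mul1r //; lia.
by exists infty; split; apply: farey_edge_infty; rewrite -?eq_h.
Qed.

Lemma farey_local_min_eq z1 z2 : (k%:Z %| (sval z1).2)%Z ->
  local_min height edge z1 -> local_min height edge z2 -> farey_conn k z1 z2 -> z1 = z2.
Proof.
apply: (@connected_local_min_eq _ height edge (fun v => k%:Z %| (sval v).2)%Z).
- exact: farey_edge_sym.
- exact: dvd_height_edge.
- by move=> w u1 u2 _; apply: farey_descent_fork.
- exact: farey_level_edge.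
Qed.

End FareyLocalMinima.

Lemma ler_minimum_height (m a c e : int) : 2 <= m -> e = 1 \/ e = -1 ->
  a != - c -> a != c + 1 -> 0 <= a * m + e * ((c + 1) * m - 1) ->
  m <= a * m + e * ((c + 1) * m - 1).
Proof.
move=> m_ge2 [->| ->] a_neq_c a_neq_c1; rewrite ?mul1r ?mulN1r; have m_ge0 : 0 <= m by lia.
- have -> : a * m + ((c + 1) * m - 1) = (a + c + 1) * m - 1 by ring.
  have : a + c + 1 != 1 by apply: contra a_neq_c => /eqP ac; apply/eqP; lia.
  move: (a + c + 1) => n n_neq1; have [n_le0 | n_ge2] : n <= 0 \/ 2 <= n by lia.
  + by have := mulr_le0_ge0 n_le0 m_ge0; lia.
  + by have := ler_wpM2r m_ge0 n_ge2; lia.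
- have -> : a * m - ((c + 1) * m - 1) = (a - c - 1) * m + 1 by ring.
  have : a - c - 1 != 0 by apply: contra a_neq_c1 => /eqP ac; apply/eqP; lia.
  move: (a - c - 1) => n n_neq0; have [n_le | n_ge1] : n <= -1 \/ 1 <= n by lia.
  + by have := ler_wpM2r m_ge0 n_le; lia.
  + by have := ler_wpM2r m_ge0 n_ge1; lia.
Qed.

Section ExplicitLocalMinima.

Variables (k p q : nat) (c : int).
Hypotheses (k_gt0 : (0 < k)%N) (p_prime : prime p) (q_prime : prime q).
Hypotheses (p_k : (p %| k)%N) (q_k : (q %| k)%N).
Hypotheses (p_c1 : (p%:Z %| c + 1)%Z) (q_c : (q%:Z %| c)%Z).

(* With m = k J.+1, a neighbour of x = minimum_point J is a x +- k r for r = minimum_point_dual J,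
   of height k (a m +- ((c + 1) m - 1)); this is below k m only for a = - c or a = c + 1, which q,
   resp. p, would divide. *)
Definition minimum_point (J : nat) : int * int :=
  (- (1 + (c + 1) * (k%:Z * J.+1%:Z)), k%:Z * (k%:Z * J.+1%:Z)).

Definition minimum_point_dual (J : nat) : int * int :=
  (- ((c + 1) ^+ 2 * J.+1%:Z), (c + 1) * (k%:Z * J.+1%:Z) - 1).

Lemma det_minimum_point J : det (minimum_point J) (minimum_point_dual J) = 1.
Proof. by rewrite /det /=; ring. Qed.

Lemma minimum_point_canon J : Defs.canon (minimum_point J).
Proof.
rewrite /Defs.canon -[gcdz _ _ == 1]/(primitive _).
apply/andP; split.
  by apply/primitiveP; exists (minimum_point_dual J); apply: det_minimum_point.
by rewrite /= -!PoszM ltz_nat !muln_gt0 k_gt0.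
Qed.

Definition minimum_vertex J : vertex := Sub (minimum_point J) (minimum_point_canon J).

Lemma minimum_vertex_local_min J : local_min height (farey_edge k) (minimum_vertex J).
Proof.
move=> u xu; rewrite -lez_nat !heightE.
set x := minimum_point J; set r := minimum_point_dual J.
have xr1 : det x r = 1 := det_minimum_point J.
have [_ u2E] := det_expand x r (sval u); rewrite xr1 mul1r in u2E.
have ndvd d : prime d -> (d %| k)%N -> ~~ (d%:Z %| det (sval u) r)%Z.
  move=> d_prime d_k; apply/negP => d_a.
  have d_b : (d%:Z %| det x (sval u))%Z by apply: dvdz_trans (farey_edge_dvd xu).
  have := primitive_basis_dvd xr1 (vertex_primitive u) d_a d_b.
  by rewrite gtr0_norm ?ltz_nat ?prime_gt0 // => -[d1]; move: (prime_gt1 d_prime); rewrite d1.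
have a_neq_c : det (sval u) r != - c.
  by apply: contraNneq (ndvd q q_prime q_k) => ->; rewrite rpredN.
have a_neq_c1 : det (sval u) r != c + 1 by apply: contraNneq (ndvd p p_prime p_k) => ->.
have kz_gt0 : 0 < k%:Z by rewrite ltz_nat.
have m_ge2 : 2 <= k%:Z * J.+1%:Z.
  have k_ge2 : (2 <= k)%N := leq_trans (prime_gt1 p_prime) (dvdn_leq k_gt0 p_k).
  by clear -k_ge2; nia.
have [e e_unit xuE] : exists2 e, e = 1 \/ e = -1 & det x (sval u) = e * k%:Z.
  move: xu; rewrite /farey_edge fdistE /= -/x => xu.
  have [xuk | xuNk] : det x (sval u) = k%:Z \/ det x (sval u) = - k%:Z by clear -xu; lia.
  - by exists 1; [left | rewrite mul1r].
  - by exists (-1); [right | rewrite mulN1r].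
have u2E' : (sval u).2 =
    k%:Z * (det (sval u) r * (k%:Z * J.+1%:Z) + e * ((c + 1) * (k%:Z * J.+1%:Z) - 1)).
  by rewrite u2E xuE /=; ring.
rewrite u2E' /= ler_pM2l //; apply: ler_minimum_height => //.
by rewrite -(pmulr_rge0 _ kz_gt0) -u2E' vertex_height_ge0.
Qed.

End ExplicitLocalMinima.

Lemma two_primes_components_infinite k p q : (0 < k)%N -> prime p -> prime q -> p != q ->
  (p %| k)%N -> (q %| k)%N -> infinite_set (farey_components k).
Proof.
move=> k_gt0 p_prime q_prime pq p_k q_k.
have /coprimezP[[a b] /= abE] : coprimez p%:Z q%:Z.
  by rewrite coprimezE /= prime_coprime // dvdn_prime2.
set c := - (b * q%:Z).
have p_c1 : (p%:Z %| c + 1)%Z by rewrite (_ : c + 1 = a * p%:Z) ?dvdz_mull // /c -abE; ring.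
have q_c : (q%:Z %| c)%Z by rewrite rpredN dvdz_mull.
have kz_neq0 : k%:Z != 0 by rewrite lt0r_neq0 ?ltz_nat.
have min_J J : local_min height (farey_edge k) (minimum_vertex c k_gt0 J).
  exact: (minimum_vertex_local_min p_prime q_prime p_k q_k p_c1 q_c (J := J)).
apply: (farey_components_infinite (g := minimum_vertex c k_gt0)) => i j ij.
have k_i : (k%:Z %| (sval (minimum_vertex c k_gt0 i)).2)%Z by apply: dvdz_mulr.
have /(congr1 (fun v => (sval v).2)) /= := farey_local_min_eq k_gt0 k_i (min_J i) (min_J j) ij.
by move=> /(mulfI kz_neq0) /(mulfI kz_neq0) [].
Qed.

Lemma two_prime_divisors k : (1 < k)%N ->
  ~ (exists p l : nat, [/\ prime p, (0 < l)%N & k = (p ^ l)%N]) ->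
  exists p q, [/\ prime p, prime q, p != q, (p %| k)%N & (q %| k)%N].
Proof.
move=> k_gt1 not_ppow; have p_prime := pdiv_prime k_gt1; have p_k := pdiv_dvd k.
have [k_pnat | k_npnat] := boolP ((pdiv k).-nat k).
  exfalso; apply: not_ppow; exists (pdiv k), (logn (pdiv k) k); split => //.
    by rewrite logn_gt0 mem_primes p_prime p_k ltnW.
  by rewrite -p_part part_pnat_id.
have /existsNP[q /not_implyP[q_prime /not_implyP[q_k q_p]]] :
    ~ forall q, prime q -> (q %| k)%N -> q \in (pdiv k : nat_pred).
  by move/(pnatP _ (ltnW k_gt1)); apply/negP.
exists (pdiv k), q; split => //.
by apply/eqP => pE; apply: q_p; rewrite -pE inE.
Qed.

Theorem theorem1p1 (k : nat) : (2 <= k)%N ->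
  (forall p l : nat, prime p -> (0 < l)%N -> k = (p ^ l)%N ->
     (farey_components k #= `I_(p ^ l.-1 * p.+1))%card) /\
  (~ (exists p l : nat, [/\ prime p, (0 < l)%N & k = (p ^ l)%N]) ->
     infinite_set (farey_components k)).
Proof.
move=> k_ge2; split.
  by move=> p [|l] // p_prime _ ->; apply: ppow_components.
move=> not_ppow; have [p [q [p_prime q_prime pq p_k q_k]]] := two_prime_divisors k_ge2 not_ppow.
exact: two_primes_components_infinite (ltnW k_ge2) p_prime q_prime pq p_k q_k.
Qed.
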